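(* Let $\eta>0$ and let $\lambda$ be an $\eta$-mixable loss function. Then $\lambda$ is proper if and only if for each $\pi\in(0,1)$ the superprediction set $\Sigma_\lambda$ lies to the Northeast of the shift of the curve $e^{-\eta x}+e^{-\eta y}=1$ that passes through $\Lambda_\pi:=(\lambda(\pi,0),\lambda(\pi,1))$ and has $\Lambda_\pi$ as its $\pi$-point.
   Context: A loss function is a map $\lambda:[0,1]\times\{0,1\}\to[0,\infty]$ satisfying: (1) $\lambda(\gamma,0)$, $\lambda(\gamma,1)$ continuous in $\gamma\in[0,1]$ (standard topology on $[0,\infty]$); (2) some $\gamma$ has both values finite; (3) no $\gamma$ has both values infinite. Superprediction set: $\Sigma_\lambda=\{(x,y)\in[0,\infty)^2:\exists\gamma\ \lambda(\gamma,0)\le x,\ \lambda(\gamma,1)\le y\}$. $\lambda$ is $\eta$-mixable if $\{(e^{-\eta x},e^{-\eta y}):(x,y)\in\Sigma_\lambda\}$ is convex; proper if $\pi\lambda(\pi,1)+(1-\pi)\lambda(\pi,0)\le\pi\lambda(\pi',1)+(1-\pi)\lambda(\pi',0)$ for all $\pi,\pi'\in[0,1]$. For $\pi\in(0,1)$, the $\pi$-point of the curve $e^{-\eta x}+e^{-\eta y}=1$ is $\bigl(-\frac1\eta\ln(1-\pi),-\frac1\eta\ln\pi\bigr)$. A shift of this curve is the curve $e^{-\eta(x-\alpha)}+e^{-\eta(y-\beta)}=1$ for some $(\alpha,\beta)\in\mathbb{R}^2$; its $\pi$-point is $(\alpha,\beta)$ plus the $\pi$-point of the original curve. A point $(x_1,y_1)$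 is Northeast of $(x_2,y_2)$ if $x_1\ge x_2$ and $y_1\ge y_2$; a set $A\subseteq\mathbb{R}^2$ lies to the Northeast of a shift if every point of $A$ is Northeast of some point of the shift. *)

From HB Require Import structures.
From mathcomp Require Import all_boot all_order all_algebra.
From mathcomp Require Import all_classical all_reals all_analysis.
Set Implicit Arguments. Unset Strict Implicit. Unset Printing Implicit Defensive.
Import Order.TTheory GRing.Theory Num.Theory numFieldNormedType.Exports.
Local Open Scope classical_set_scope.
Local Open Scope ring_scope.

(* Outcomes {0,1} are encoded as bool: false = 0, true = 1.
   A prediction gamma ranges over R, but only gamma in [0,1] matter. *)
Section Loss.
Variable R : realType.

Definition unit_interval : set R := [set g | 0 <= g <= 1].

Definition is_loss (lam : R -> bool -> \bar R) : Prop :=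
  (forall g b, unit_interval g -> (0 <= lam g b)%E) /\
  {within unit_interval, continuous (fun g => lam g false)} /\
  {within unit_interval, continuous (fun g => lam g true)} /\
  (exists g, unit_interval g /\ lam g false \is a fin_num /\ lam g true \is a fin_num) /\
  (forall g, unit_interval g -> ~ (lam g false = +oo%E /\ lam g true = +oo%E)).

Definition superprediction (lam : R -> bool -> \bar R) : set (R * R) :=
  [set p | 0 <= p.1 /\ 0 <= p.2 /\
    exists g, unit_interval g /\ (lam g false <= p.1%:E)%E /\ (lam g true <= p.2%:E)%E].

Definition convex_set2 (A : set (R * R)) : Prop :=
  forall u v t, A u -> A v -> 0 <= t <= 1 ->
    A (t * u.1 + (1 - t) * v.1, t * u.2 + (1 - t) * v.2).

Definition mixable (eta : R) (lam : R -> bool -> \bar R) : Prop :=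
  convex_set2 [set q | exists2 p, superprediction lam p &
                         q = (expR (- eta * p.1), expR (- eta * p.2))].

Definition proper_loss (lam : R -> bool -> \bar R) : Prop :=
  forall pi pi', unit_interval pi -> unit_interval pi' ->
    (pi%:E * lam pi true + (1 - pi)%:E * lam pi false
      <= pi%:E * lam pi' true + (1 - pi)%:E * lam pi' false)%E.

Definition shifted_curve (eta alpha beta : R) : set (R * R) :=
  [set p | expR (- eta * (p.1 - alpha)) + expR (- eta * (p.2 - beta)) = 1].

Definition pi_point (eta pi : R) : R * R :=
  (- eta^-1 * ln (1 - pi), - eta^-1 * ln pi).

Definition northeast (p q : R * R) : Prop := q.1 <= p.1 /\ q.2 <= p.2.

Definition lies_northeast (A C : set (R * R)) : Prop :=
  forall p, A p -> exists2 q, C q & northeast p q.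

End Loss.

(* Put Lambda_pi = (x0, y0).  The shift of e^{-eta x} + e^{-eta y} = 1 with pi-point Lambda_pi is
   (1 - pi) e^{-eta (x - x0)} + pi e^{-eta (y - y0)} = 1, and a point lies Northeast of it iff the
   left-hand side is at most 1 there.  As e^z >= 1 + z, that region lies in the half-plane
   (1 - pi) x + pi y >= (1 - pi) x0 + pi y0, so the curve condition makes pi minimise the
   pi-expected loss for interior pi; the endpoints pi = 0, 1 follow by continuity of the loss.
   Conversely, if a superprediction point p violates the inequality, mixing p into Lambda_pi with a
   small weight t in the coordinates e^{-eta x}, e^{-eta y} (allowed by mixability) produces a
   superprediction point whose pi-expected loss is lower by
   ((1 - pi) ln (1 + t a) + pi ln (1 + t b)) / eta, where a, b are e^{-eta (p - Lambda_pi)} - 1; its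
   derivative at t = 0 is positive, contradicting properness. *)

From HB Require Import structures.
From mathcomp Require Import all_boot all_order all_algebra.
From mathcomp Require Import all_classical all_reals all_analysis.
From mathcomp Require Import ring lra.
Import Order.TTheory GRing.Theory Num.Theory numFieldNormedType.Exports.
Local Open Scope classical_set_scope.
Local Open Scope ring_scope.

Section MixableProperLoss.
Local Set Implicit Arguments.
Local Unset Strict Implicit.
Variable R : realType.
Implicit Types (eta pi t : R) (p : R * R) (lam : R -> bool -> \bar R).

Lemma northeast_shifted_curveP eta alpha beta p : 0 < eta ->
  (exists2 q, shifted_curve eta alpha beta q & northeast p q) <->
  expR (- eta * (p.1 - alpha)) + expR (- eta * (p.2 - beta)) <= 1.
Proof.
move=> eta0; split.
  move=> [q]; rewrite /shifted_curve /northeast /= => <- [le1 le2].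
  by apply: lerD; rewrite ler_expR; nra.
set E1 := expR _; set E2 := expR _ => le1.
have E20 : 0 < E2 by apply: expR_gt0.
have E1lt1 : 0 < 1 - E1 by lra.
exists (p.1, beta - ln (1 - E1) / eta); rewrite /shifted_curve /northeast /=.
  have -> : - eta * (beta - ln (1 - E1) / eta - beta) = ln (1 - E1).
    by field; rewrite gt_eqF.
  by rewrite lnK ?posrE // /E1; lra.
split => //.
have lnE2 : - eta * (p.2 - beta) <= ln (1 - E1).
  by rewrite -ler_expR lnK ?posrE // -/E2; lra.
set L := ln (1 - E1) / eta.
have eL : ln (1 - E1) = eta * L by rewrite /L; field; rewrite gt_eqF.
rewrite eL in lnE2; nra.
Qed.

Lemma expR_shift_ln eta w alpha z : 0 < eta -> 0 < w ->
  expR (- eta * (z - alpha)) = w * expR (- eta * (z - (alpha + - eta^-1 * ln w))).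
Proof.
move=> eta0 w0.
have -> : - eta * (z - (alpha + - eta^-1 * ln w)) = - eta * (z - alpha) - ln w.
  by field; rewrite gt_eqF.
by rewrite expRD expRN lnK //; field; rewrite gt_eqF.
Qed.

Lemma northeast_pi_curveP eta pi alpha beta p : 0 < eta -> 0 < pi < 1 ->
  (exists2 q, shifted_curve eta alpha beta q & northeast p q) <->
  (1 - pi) * expR (- eta * (p.1 - (alpha + (pi_point eta pi).1)))
    + pi * expR (- eta * (p.2 - (beta + (pi_point eta pi).2))) <= 1.
Proof.
move=> eta0 /andP[pi0 pi1]; rewrite northeast_shifted_curveP //.
rewrite (@expR_shift_ln eta (1 - pi) alpha) ?subr_gt0 //.
by rewrite (@expR_shift_ln eta pi beta).
Qed.

Lemma mix_le0_of_mix_expR_le1 pi (A B : R) : 0 <= pi <= 1 ->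
  (1 - pi) * expR A + pi * expR B <= 1 -> (1 - pi) * A + pi * B <= 0.
Proof.
move=> /andP[pi0 pi1] le1.
have eA : (1 - pi) * (1 + A) <= (1 - pi) * expR A.
  by apply: ler_wpM2l; [lra | exact: expR_ge1Dx].
have eB : pi * (1 + B) <= pi * expR B by apply: ler_wpM2l => //; exact: expR_ge1Dx.
lra.
Qed.

Lemma divDx_le_ln1Dx (u : R) : -1 < u -> u / (1 + u) <= ln (1 + u).
Proof.
move=> u1; have u0 : 0 < 1 + u by lra.
have lt1 : u / (1 + u) < 1 by rewrite ltr_pdivrMr //; lra.
have := @le_ln1Dx R (- (u / (1 + u))).
have -> : 1 - u / (1 + u) = (1 + u)^-1 by field; rewrite gt_eqF.
rewrite lnV ?posrE // => /(_ ltac:(lra)); lra.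
Qed.

Lemma mix_ln1Dx_gt0 pi (a b : R) : 0 <= pi <= 1 -> -1 < a -> -1 < b ->
  0 < (1 - pi) * a + pi * b ->
  exists2 t, 0 < t <= 1 & 0 < (1 - pi) * ln (1 + t * a) + pi * ln (1 + t * b).
Proof.
move=> /andP[pi0 pi1] a1 b1; set c := _ + _ => c0.
set k := `|a * b|.
have k0 : 0 <= k := normr_ge0 _.
have abk : - k <= a * b by have := ler_norm (- (a * b)); rewrite normrN -/k; lra.
(* t is small enough that c + t a b, the numerator of the lower bound below, stays positive *)
set t := c / (c + 2 * k).
have tck : t * (c + 2 * k) = c by rewrite /t; field; rewrite gt_eqF //; lra.
have t0 : 0 < t by apply: divr_gt0; lra.
have t1 : t <= 1 by nra.
have tab : - (t * k) <= t * (a * b) by rewrite -mulrN; apply: ler_wpM2l; lra.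
have ta1 : 0 < 1 + t * a.
  have : 0 < t * (1 + a) by apply: mulr_gt0; lra.
  nra.
have tb1 : 0 < 1 + t * b.
  have : 0 < t * (1 + b) by apply: mulr_gt0; lra.
  nra.
exists t; first by apply/andP.
have lna : t * a / (1 + t * a) <= ln (1 + t * a) by apply: divDx_le_ln1Dx; lra.
have lnb : t * b / (1 + t * b) <= ln (1 + t * b) by apply: divDx_le_ln1Dx; lra.
have := ler_wpM2l pi0 lnb.
have pi1' : 0 <= 1 - pi by lra.
have := ler_wpM2l pi1' lna.
suff : 0 < (1 - pi) * (t * a / (1 + t * a)) + pi * (t * b / (1 + t * b)) by lra.
have -> : (1 - pi) * (t * a / (1 + t * a)) + pi * (t * b / (1 + t * b))
    = t * (c + t * (a * b)) / ((1 + t * a) * (1 + t * b)).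
  by rewrite /c; field; rewrite !gt_eqF.
by apply: divr_gt0; apply: mulr_gt0 => //; nra.
Qed.

Lemma unit_intervalW (x : R) : 0 < x < 1 -> unit_interval x.
Proof. by move=> /andP[x0 x1]; apply/andP; split; lra. Qed.

Lemma unit_interval_flip (x : R) : unit_interval x -> unit_interval (1 - x).
Proof. by move=> /andP[x0 x1]; apply/andP; split; lra. Qed.

Lemma within_unit_continuous_flip (f : R -> \bar R) :
  {within (@unit_interval R), continuous f} ->
  {within (@unit_interval R), continuous (fun x => f (1 - x))}.
Proof.
move=> /subspace_continuousP fc; apply/subspace_continuousP => x Ix.
have flip : (1 - y) @[y --> within (@unit_interval R) (nbhs x)]
    --> within (@unit_interval R) (nbhs (1 - x)).
  move=> P /= PI.
  have flipx : (fun y : R => 1 - y) @ x --> 1 - x.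
    by apply: cvgB; [exact: cvg_cst | exact: cvg_id].
  have {}PI : \forall y \near x, unit_interval (1 - y) -> P (1 - y) := flipx _ PI.
  change (\forall y \near x, unit_interval y -> P (1 - y)).
  by apply: filterS PI => y IP /unit_interval_flip.
exact: (cvg_comp _ _ flip (fc _ (unit_interval_flip Ix))).
Qed.

Lemma within_unit_closed (f : R -> \bar R) (C : set (\bar R)) x :
  {within (@unit_interval R), continuous f} -> unit_interval x -> closed C ->
  (forall d, 0 < d -> exists2 y, unit_interval y /\ `|x - y| < d & C (f y)) ->
  C (f x).
Proof.
move=> /subspace_continuousP fc Ix Cc approx; apply/not_notP => nCfx.
have /nbhs_ballP[d d0 dC] := fc x Ix _ (open_nbhs_nbhs (conj (closed_openC Cc) nCfx)).
have [y [Iy xy] Cfy] := approx d d0.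
exact: dC y xy Iy Cfy.
Qed.

Lemma le_endpoint0 (f : R -> \bar R) (u v : R -> R) :
  {within (@unit_interval R), continuous f} ->
  (forall x, 0 < x < 1 -> f x = (u x)%:E) ->
  (forall x, 0 < x < 1 -> 0 <= v x) ->
  (forall x y, 0 < x < 1 -> 0 < y < 1 ->
     (1 - x) * u x + x * v x <= (1 - x) * u y + x * v y) ->
  forall y, unit_interval y -> (f 0%R <= f y)%E.
Proof.
move=> fc fu v0 uv_le.
have I0 : unit_interval (0 : R) by apply/andP; split; lra.
have I1 : unit_interval (1 : R) by apply/andP; split; lra.
have interior y : 0 < y < 1 -> (f 0%R <= f y)%E.
  move=> y01; rewrite (fu y) //; apply/lee_addgt0Pr => e e0; rewrite -EFinD.
  apply: (within_unit_closed (C := [set z | (z <= (u y + e)%:E)%E]) fc I0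
    (@closed_ereal_ge_ereal _ _)) => d d0.
  have vy0 := v0 y y01.
  pose x := Num.min (Num.min (d / 2) (1 / 2)) (e / (2 * (v y + 1))).
  have x0 : 0 < x by rewrite !lt_min !divr_gt0 //; lra.
  have xd : x <= d / 2 by rewrite !ge_min lexx.
  have x12 : x <= 1 / 2 by rewrite !ge_min lexx orbT.
  have xe : x * (2 * (v y + 1)) <= e by rewrite -ler_pdivlMr ?ge_min ?lexx ?orbT //; lra.
  have x01 : 0 < x < 1 by apply/andP; split; lra.
  exists x; first by split; [apply/andP; split; lra | rewrite sub0r normrN gtr0_norm //; lra].
  rewrite /= (fu x) // lee_fin leNgt; apply/negP => gt_e.
  have := uv_le x y x01 y01.
  have : (1 - x) * e < (1 - x) * (u x - u y) by rewrite ltr_pM2l; lra.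
  have : x * e <= e / 2 by nra.
  have := mulr_ge0 (ltW x0) (v0 x x01).
  nra.
move=> y /andP[y0 y1].
have [->|y_gt0] := eqVneq y 0; first by [].
have [->|y_lt1] := eqVneq y 1; last by apply: interior; apply/andP; split; lra.
apply: (within_unit_closed (C := [set z | (f 0%R <= z)%E]) fc I1
  (@closed_ereal_le_ereal _ _)).
move=> d d0.
pose x := Num.max (1 / 2) (1 - d / 2).
have x_ge : 1 / 2 <= x by rewrite le_max lexx.
have x_lt1 : x < 1 by rewrite gt_max; apply/andP; split; lra.
have x01 : 0 < x < 1 by apply/andP; split; lra.
exists x; last exact: interior.
split; first by apply/andP; split; lra.
have : 1 - d / 2 <= x by rewrite le_max lexx orbT.
by rewrite ger0_norm; lra.
Qed.

Lemma mix_expR_lnE t (u v w : R) : expR w = t * expR u + (1 - t) * expR v ->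
  w = v + ln (1 + t * (expR (u - v) - 1)).
Proof.
move=> ew; have ev0 : expR v != 0 by rewrite gt_eqF // expR_gt0.
have -> : 1 + t * (expR (u - v) - 1) = expR (w - v).
  by rewrite !expRD !expRN ew; field.
by rewrite expRK; ring.
Qed.

Lemma mix_pinfty pi (a b : \bar R) : 0 < pi < 1 -> (0 <= a)%E -> (0 <= b)%E ->
  a = +oo%E \/ b = +oo%E -> (pi%:E * a + (1 - pi)%:E * b = +oo)%E.
Proof.
move=> /andP[pi0 pi1] a0 b0 [->|->].
- rewrite gt0_muley ?lte_fin // addye //.
  have : (0 <= (1 - pi)%:E * b)%E by apply: mule_ge0; rewrite // lee_fin; lra.
  by case: (_ * _)%E.
- rewrite (gt0_muley (x := (1 - pi)%:E)) ?lte_fin; last lra.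
  rewrite addeC addye //.
  have : (0 <= pi%:E * a)%E by apply: mule_ge0; rewrite // lee_fin; lra.
  by case: (_ * _)%E.
Qed.

Lemma superprediction_loss lam g x0 y0 : is_loss lam -> unit_interval g ->
  lam g false = x0%:E -> lam g true = y0%:E -> superprediction lam (x0, y0).
Proof.
move=> [lam0 _] Ig ex ey.
have := lam0 g false Ig; have := lam0 g true Ig; rewrite ex ey !lee_fin => y00 x00.
by split => //; split => //; exists g; rewrite ex ey.
Qed.

Lemma proper_loss_EFin lam pi : is_loss lam -> proper_loss lam -> 0 < pi < 1 ->
  exists x0 y0, lam pi false = x0%:E /\ lam pi true = y0%:E.
Proof.
move=> [lam0 [_ [_ [[g [Ig [/EFin_fin_numP[a ea] /EFin_fin_numP[b eb]]]] _]]]] prop pi01.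
have Ipi := unit_intervalW pi01.
have le_fin := prop pi g Ipi Ig; rewrite ea eb -!EFinM -!EFinD in le_fin.
have fin c : lam pi c \is a fin_num.
  rewrite ge0_fin_numE ?lam0 // ltey; apply/eqP => inf.
  move: le_fin; rewrite mix_pinfty ?lam0 ?leye_eq //.
  by case: c inf; [left | right].
have [/EFin_fin_numP[x0 ex] /EFin_fin_numP[y0 ey]] := (fin false, fin true).
by exists x0, y0.
Qed.

Lemma proper_le_superprediction lam pi x0 y0 p : proper_loss lam -> unit_interval pi ->
  lam pi false = x0%:E -> lam pi true = y0%:E -> superprediction lam p ->
  (1 - pi) * x0 + pi * y0 <= (1 - pi) * p.1 + pi * p.2.
Proof.
move=> prop Ipi ex ey [_ [_ [g [Ig [g0 g1]]]]].
have /andP[pi0 pi1] := Ipi.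
have le_p : (pi%:E * lam g true + (1 - pi)%:E * lam g false
            <= pi%:E * p.2%:E + (1 - pi)%:E * p.1%:E)%E.
  by apply: leeD; apply: lee_wpmul2l => //; rewrite lee_fin; lra.
have := le_trans (prop pi g Ipi Ig) le_p.
rewrite ex ey -!EFinM -!EFinD lee_fin; lra.
Qed.

Lemma proper_mixable_pi_curve eta lam pi x0 y0 p : 0 < eta -> 0 < pi < 1 ->
  is_loss lam -> proper_loss lam -> mixable eta lam ->
  lam pi false = x0%:E -> lam pi true = y0%:E -> superprediction lam p ->
  (1 - pi) * expR (- eta * (p.1 - x0)) + pi * expR (- eta * (p.2 - y0)) <= 1.
Proof.
move=> eta0 pi01 loss prop mix ex ey Sp.
have /andP[pi0 pi1] := pi01; have Ipi := unit_intervalW pi01.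
rewrite leNgt; apply/negP => gt1.
set a := expR (- eta * (p.1 - x0)) - 1; set b := expR (- eta * (p.2 - y0)) - 1.
have [t /andP[t0 t1] gain] :
    exists2 t, 0 < t <= 1 & 0 < (1 - pi) * ln (1 + t * a) + pi * ln (1 + t * b).
  apply: mix_ln1Dx_gt0; rewrite /a /b.
  - by apply/andP; split; lra.
  - by have := expR_gt0 (- eta * (p.1 - x0)); lra.
  - by have := expR_gt0 (- eta * (p.2 - y0)); lra.
  - lra.
have t01 : 0 <= t <= 1 by apply/andP; split; lra.
have [r Sr [e1 e2]] := mix _ _ t (ex_intro2 _ _ p Sp erefl)
  (ex_intro2 _ _ (x0, y0) (superprediction_loss loss Ipi ex ey) erefl) t01.
have {}e1 := mix_expR_lnE (esym e1); have {}e2 := mix_expR_lnE (esym e2).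
rewrite /= -!mulrBr -/a -/b in e1 e2.
have := proper_le_superprediction prop Ipi ex ey Sr.
rewrite -(ler_pM2l eta0); nra.
Qed.

Lemma pi_curve_le_mix eta pi x0 y0 p : 0 < eta -> 0 <= pi <= 1 ->
  (1 - pi) * expR (- eta * (p.1 - x0)) + pi * expR (- eta * (p.2 - y0)) <= 1 ->
  (1 - pi) * x0 + pi * y0 <= (1 - pi) * p.1 + pi * p.2.
Proof.
move=> eta0 pi01 /(mix_le0_of_mix_expR_le1 pi01) le0.
rewrite -subr_ge0 -(pmulr_rge0 _ eta0); lra.
Qed.

Lemma northeast_expected_loss_le eta lam pi alpha beta pi' :
  0 < eta -> 0 < pi < 1 -> is_loss lam -> unit_interval pi' ->
  lam pi false = (alpha + (pi_point eta pi).1)%:E ->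
  lam pi true = (beta + (pi_point eta pi).2)%:E ->
  lies_northeast (superprediction lam) (shifted_curve eta alpha beta) ->
  (pi%:E * lam pi true + (1 - pi)%:E * lam pi false
    <= pi%:E * lam pi' true + (1 - pi)%:E * lam pi' false)%E.
Proof.
move=> eta0 pi01 loss Ipi' ex ey NE; have [lam0 _] := loss.
have [inf|fin] := pselect (lam pi' true = +oo%E \/ lam pi' false = +oo%E).
  by rewrite (mix_pinfty pi01 (lam0 _ _ Ipi') (lam0 _ _ Ipi') inf) leey.
have fin_c c : lam pi' c \is a fin_num.
  rewrite ge0_fin_numE ?lam0 // ltey; apply/eqP => inf.
  by apply: fin; case: c inf; [left | right].
have [/EFin_fin_numP[x1 e1] /EFin_fin_numP[y1 e2]] := (fin_c false, fin_c true).
have [q Cq NEq] := NE _ (superprediction_loss loss Ipi' e1 e2).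
have := pi_curve_le_mix eta0 (unit_intervalW pi01)
  ((northeast_pi_curveP alpha beta _ eta0 pi01).1 (ex_intro2 _ _ q Cq NEq)).
rewrite ex ey e1 e2 -!EFinM -!EFinD lee_fin /=; lra.
Qed.

Lemma proper_loss_of_interior lam : is_loss lam ->
  (forall pi, 0 < pi < 1 -> lam pi false \is a fin_num /\ lam pi true \is a fin_num) ->
  (forall pi pi', 0 < pi < 1 -> unit_interval pi' ->
    (pi%:E * lam pi true + (1 - pi)%:E * lam pi false
      <= pi%:E * lam pi' true + (1 - pi)%:E * lam pi' false)%E) ->
  proper_loss lam.
Proof.
move=> [lam0 [cont0 [cont1 _]]] fin interior pi pi' Ipi Ipi'.
pose l x c := fine (lam x c).
have lE x c : 0 < x < 1 -> lam x c = (l x c)%:E.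
  by move=> x01; rewrite fineK //; case: c; case: (fin x x01).
have l_ge0 x c : 0 < x < 1 -> 0 <= l x c.
  by move=> x01; rewrite -lee_fin -lE // lam0 //; exact: unit_intervalW.
have real_le x y : 0 < x < 1 -> 0 < y < 1 ->
    (1 - x) * l x false + x * l x true <= (1 - x) * l y false + x * l y true.
  move=> x01 y01; have := interior x y x01 (unit_intervalW y01).
  by rewrite !lE // -!EFinM -!EFinD lee_fin; lra.
have /andP[pi0 pi1] := Ipi.
have [->|pi_gt0] := eqVneq pi 0.
  rewrite subr0 !mul0e !add0e !mul1e.
  by apply: (le_endpoint0 cont0 (fun x => lE x false) (fun x => l_ge0 x true)).
have [->|pi_lt1] := eqVneq pi 1; last first.
  by apply: interior => //; rewrite !lt_neqAle eq_sym pi_gt0 pi_lt1 pi0 pi1.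
rewrite subrr !mul0e !adde0 !mul1e.
have flip (x : R) : 0 < x < 1 -> 0 < 1 - x < 1 by move=> /andP[? ?]; apply/andP; split; lra.
have := le_endpoint0 (within_unit_continuous_flip cont1)
  (fun x x01 => lE _ true (flip x x01)) (fun x x01 => l_ge0 _ false (flip x x01))
  _ (unit_interval_flip Ipi').
rewrite subr0 opprB addrC subrK; apply=> x y x01 y01.
by have := real_le _ _ (flip x x01) (flip y y01); lra.
Qed.

End MixableProperLoss.

Theorem lemma2 (R : realType) (eta : R) (lam : R -> bool -> \bar R) :
  0 < eta -> is_loss lam -> mixable eta lam ->
  (proper_loss lam <->
   forall pi : R, 0 < pi < 1 ->
     exists alpha beta : R,
       lam pi false = (alpha + (pi_point eta pi).1)%:E /\
       lam pi true = (beta + (pi_point eta pi).2)%:E /\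
       lies_northeast (superprediction lam) (shifted_curve eta alpha beta)).
Proof.
move=> eta0 loss mix; split=> [prop pi pi01 | curve].
  have [x0 [y0 [ex ey]]] := proper_loss_EFin loss prop pi01.
  exists (x0 - (pi_point eta pi).1), (y0 - (pi_point eta pi).2); rewrite !subrK.
  do 2!split => //; move=> p Sp.
  apply/(northeast_pi_curveP _ _ _ eta0 pi01); rewrite !subrK.
  exact: proper_mixable_pi_curve ex ey Sp.
apply: proper_loss_of_interior => // [pi pi01 | pi pi' pi01 Ipi'].
  by have [alpha [beta [-> [-> _]]]] := curve pi pi01.
have [alpha [beta [ex [ey NE]]]] := curve pi pi01.
exact: northeast_expected_loss_le ex ey NE.
Qed.
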